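(* Let $p\in(0,1)$ be fixed, $q=1-p$. As $n\to\infty$, for every real $r>0$, $$f_r(n)=\frac{1}{(np)^r}\left(1+\frac{r(r+1)q}{2(np)}+\frac{r(r+1)(r+2)q(4+q+3rq)}{24(np)^2}+O\!\left(n^{-3}\right)\right).$$ In particular, $$f_1(n)=\frac{1}{np}\left(1+\frac{q}{np}+\frac{q(1+q)}{(np)^2}+\frac{q(1+4q+q^2)}{(np)^3}+\frac{q(1+q)(1+10q+q^2)}{(np)^4}+\frac{q(1+26q+66q^2+26q^3+q^4)}{(np)^5}+O(n^{-6})\right),$$ $$f_2(n)=\frac{1}{(np)^2}\left(1+\frac{3q}{np}+\frac{q(4+7q)}{(np)^2}+\frac{5q(1+6q+3q^2)}{(np)^3}+\frac{q(6+91q+146q^2+31q^3)}{(np)^4}+O(n^{-5})\right),$$ $$f_3(n)=\frac{1}{(np)^3}\left(1+\frac{6q}{np}+\frac{5q(2+5q)}{(np)^2}+\frac{15q(1+8q+6q^2)}{(np)^3}+\frac{7q(3+58q+128q^2+43q^3)}{(np)^4}+O(n^{-5})\right).$$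
   Context: For a positive integer $n$ and real $r>0$, $f_r(n)=\sum_{i=1}^n\binom{n}{i}p^iq^{n-i}\,i^{-r}$ (the $r$-th inverse moment of the positive binomial distribution times $1-q^n$). *)

From Stdlib Require Import Reals List Lra Lia.
Open Scope R_scope.

Definition f_r (p r : R) (n : nat) : R :=
  fold_right Rplus 0
    (map (fun i => C n i * p ^ i * (1 - p) ^ (n - i) * Rpower (INR i) (- r))
         (seq 1 n)).

Definition bigO_inv_pow (E : nat -> R) (k : nat) : Prop :=
  exists K : R, exists N : nat, forall n : nat, (N <= n)%nat ->
    Rabs (E n) <= K / (INR n) ^ k.

(* Write [f_r(n) = E[X^-r; X >= 1]] with [X ~ Binomial(n, p)].
   For real [r > 0], put [X = np (1 + u)] and expand [(1 + u)^-r] by Taylor's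
   formula to order 5.  The central moments of [X] up to order 6 are polynomials
   in [n] of degree at most 3, which yields the expansion with an [O(n^-3)] error.
   The Taylor bound needs [u >= -1/2], i.e. [X >= np/2]; that event is controlled
   by [2^(np/2) E[2^-X] = (2^(p/2) (1 - p/2))^n], which is exponentially small.
   For [r = 1, 2, 3] the longer expansions come from the factorial series of
   [i^-r] in the inverse rising factorials [1/((i+1)...(i+k))]: by binomial
   absorption their means are [1/(((n+1)p)...((n+k)p))] up to exponentially
   small errors, and the truncated series has an [O(i^-K)] remainder. *)

From Coquelicot Require Import Coquelicot.
From Stdlib Require Import Reals List Lra Lia Factorial.
Import ListNotations.
Open Scope R_scope.

(* Pascal's recursion gives [binom n k = 0] for [k > n], where Stdlib's [C n k]
   is a junk value because of truncated subtraction. *)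
Fixpoint binom (n k : nat) : R :=
  match n, k with
  | O, O => 1
  | O, S _ => 0
  | S _, O => 1
  | S n', S k' => binom n' k' + binom n' (S k')
  end.

Lemma binom_lt (n k : nat) : (n < k)%nat -> binom n k = 0.
Proof.
  revert k; induction n as [|n IH]; intros [|k] Hk; simpl; try lia; auto.
  rewrite !IH by lia; ring.
Qed.

Lemma binom_ge0 (n k : nat) : 0 <= binom n k.
Proof.
  revert k; induction n as [|n IH]; intros [|k]; simpl; try lra.
  pose proof (IH k); pose proof (IH (S k)); lra.
Qed.

Lemma binom_0_r (n : nat) : binom n 0 = 1.
Proof. now destruct n. Qed.

Lemma C_0_r (n : nat) : C n 0 = 1.
Proof.
  unfold C; rewrite Nat.sub_0_r; simpl.
  pose proof (INR_fact_neq_0 n); field; auto.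
Qed.

Lemma C_diag (n : nat) : C n n = 1.
Proof.
  unfold C; rewrite Nat.sub_diag; simpl.
  pose proof (INR_fact_neq_0 n); field; auto.
Qed.

Lemma binom_eq_C (n k : nat) : (k <= n)%nat -> binom n k = C n k.
Proof.
  revert k; induction n as [|n IH]; intros [|k] Hk; simpl.
  - now rewrite C_0_r.
  - lia.
  - now rewrite C_0_r.
  - destruct (Nat.eq_dec k n) as [->|Hkn].
    + rewrite (binom_lt n (S n)), IH, !C_diag by lia; ring.
    + rewrite !IH by lia; apply pascal; lia.
Qed.

Lemma binom_absorb (n i : nat) :
  binom n i * (INR n + 1) = binom (S n) (S i) * (INR i + 1).
Proof.
  destruct (Compare_dec.le_lt_dec i n) as [Hi|Hi].
  - rewrite !binom_eq_C by lia; unfold C.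
    replace (S n - S i)%nat with (n - i)%nat by lia.
    rewrite !fact_simpl, !mult_INR, !S_INR.
    pose proof (INR_fact_neq_0 n); pose proof (INR_fact_neq_0 i).
    pose proof (INR_fact_neq_0 (n - i)); pose proof (pos_INR i).
    field; repeat split; auto; lra.
  - rewrite !binom_lt by lia; ring.
Qed.

Fixpoint sum_lt (f : nat -> R) (n : nat) : R :=
  match n with O => 0 | S m => sum_lt f m + f m end.

Lemma sum_lt_ext (f g : nat -> R) (n : nat) :
  (forall i, (i < n)%nat -> f i = g i) -> sum_lt f n = sum_lt g n.
Proof. induction n; intros H; simpl; auto. rewrite IHn, H; auto. Qed.

Lemma sum_lt_plus (f g : nat -> R) (n : nat) :
  sum_lt (fun i => f i + g i) n = sum_lt f n + sum_lt g n.
Proof. induction n; simpl; try rewrite IHn; ring. Qed.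

Lemma sum_lt_scal (c : R) (f : nat -> R) (n : nat) :
  sum_lt (fun i => c * f i) n = c * sum_lt f n.
Proof. induction n; simpl; try rewrite IHn; ring. Qed.

Lemma sum_lt_shift (f : nat -> R) (n : nat) :
  sum_lt f (S n) = f O + sum_lt (fun i => f (S i)) n.
Proof. induction n; simpl in *; try rewrite IHn; ring. Qed.

Lemma sum_lt_le (f g : nat -> R) (n : nat) :
  (forall i, (i < n)%nat -> f i <= g i) -> sum_lt f n <= sum_lt g n.
Proof.
  induction n; intros H; simpl; try lra.
  pose proof (H n ltac:(lia)); pose proof (IHn (fun i Hi => H i ltac:(lia))); lra.
Qed.

Lemma sum_lt_abs (f : nat -> R) (n : nat) :
  Rabs (sum_lt f n) <= sum_lt (fun i => Rabs (f i)) n.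
Proof.
  induction n; simpl.
  - rewrite Rabs_R0; lra.
  - eapply Rle_trans; [apply Rabs_triang | lra].
Qed.

Lemma fold_right_map_seq (h : nat -> R) (s m : nat) :
  fold_right Rplus 0 (map h (seq s m)) = sum_lt (fun i => h (s + i)%nat) m.
Proof.
  revert s; induction m as [|m IH]; intros s; cbn [seq map fold_right]; auto.
  rewrite IH, sum_lt_shift, Nat.add_0_r.
  rewrite (sum_lt_ext (fun i => h (s + S i)%nat) (fun i => h (S s + i)%nat))
    by (intros; f_equal; lia).
  ring.
Qed.

Definition bin_pmf (p : R) (n k : nat) : R := binom n k * p ^ k * (1 - p) ^ (n - k).

Definition bin_mean (p : R) (n : nat) (g : nat -> R) : R :=
  sum_lt (fun k => bin_pmf p n k * g k) (S n).

Lemma bin_pmf_ge0 (p : R) (n k : nat) : 0 <= p <= 1 -> 0 <= bin_pmf p n k.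
Proof.
  intros Hp; unfold bin_pmf.
  pose proof (binom_ge0 n k); pose proof (pow_le p k ltac:(lra)).
  pose proof (pow_le (1 - p) (n - k) ltac:(lra)).
  repeat apply Rmult_le_pos; auto.
Qed.

Lemma bin_pmf_S_0 (p : R) (n : nat) : bin_pmf p (S n) 0 = (1 - p) * bin_pmf p n 0.
Proof. unfold bin_pmf; rewrite !binom_0_r; simpl; rewrite Nat.sub_0_r; ring. Qed.

Lemma bin_pmf_S_S (p : R) (n k : nat) :
  bin_pmf p (S n) (S k) = p * bin_pmf p n k + (1 - p) * bin_pmf p n (S k).
Proof.
  unfold bin_pmf; simpl binom; replace (S n - S k)%nat with (n - k)%nat by lia.
  destruct (Compare_dec.le_lt_dec n k).
  - rewrite (binom_lt n (S k)) by lia; simpl; ring.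
  - replace (n - k)%nat with (S (n - S k)) by lia; simpl; ring.
Qed.

Lemma bin_pmf_out (p : R) (n : nat) : bin_pmf p n (S n) = 0.
Proof. unfold bin_pmf; rewrite binom_lt by lia; ring. Qed.

Lemma bin_mean_ext (p : R) (n : nat) (f g : nat -> R) :
  (forall i, (i <= n)%nat -> f i = g i) -> bin_mean p n f = bin_mean p n g.
Proof. intros H; apply sum_lt_ext; intros; rewrite H by lia; auto. Qed.

Lemma bin_mean_plus (p : R) (n : nat) (f g : nat -> R) :
  bin_mean p n (fun i => f i + g i) = bin_mean p n f + bin_mean p n g.
Proof. unfold bin_mean; rewrite <- sum_lt_plus; apply sum_lt_ext; intros; ring. Qed.

Lemma bin_mean_scal (p : R) (n : nat) (c : R) (f : nat -> R) :
  bin_mean p n (fun i => c * f i) = c * bin_mean p n f.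
Proof. unfold bin_mean; rewrite <- sum_lt_scal; apply sum_lt_ext; intros; ring. Qed.

Lemma bin_mean_minus (p : R) (n : nat) (f g : nat -> R) :
  bin_mean p n (fun i => f i - g i) = bin_mean p n f - bin_mean p n g.
Proof.
  rewrite (bin_mean_ext p n _ (fun i => f i + -1 * g i)) by (intros; ring).
  rewrite bin_mean_plus, bin_mean_scal; ring.
Qed.

Lemma bin_mean_sum (p : R) (n : nat) (f : nat -> nat -> R) (K : nat) :
  bin_mean p n (fun i => sum_lt (fun k => f k i) K) = sum_lt (fun k => bin_mean p n (f k)) K.
Proof.
  induction K as [|K IH]; simpl.
  - rewrite (bin_mean_ext p n _ (fun i => 0 * 0)) by (intros; ring).
    rewrite bin_mean_scal; ring.
  - now rewrite bin_mean_plus, IH.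
Qed.

(* One Bernoulli trial more: [X_{n+1} = X_n + B] with [B ~ Bernoulli(p)]. *)
Lemma bin_mean_S (p : R) (n : nat) (g : nat -> R) :
  bin_mean p (S n) g = (1 - p) * bin_mean p n g + p * bin_mean p n (fun i => g (S i)).
Proof.
  unfold bin_mean; rewrite sum_lt_shift, bin_pmf_S_0.
  rewrite (sum_lt_ext _ (fun i => p * (bin_pmf p n i * g (S i))
                                  + (1 - p) * (bin_pmf p n (S i) * g (S i))))
    by (intros; rewrite bin_pmf_S_S; ring).
  rewrite sum_lt_plus, !sum_lt_scal.
  assert (Hlast : sum_lt (fun k => bin_pmf p n k * g k) (S n)
                  = bin_pmf p n O * g O + sum_lt (fun i => bin_pmf p n (S i) * g (S i)) (S n)).
  { rewrite <- (sum_lt_shift (fun k => bin_pmf p n k * g k)); simpl.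
    rewrite bin_pmf_out; ring. }
  rewrite Hlast; ring.
Qed.

Lemma bin_mean_const (p : R) (n : nat) (c : R) : bin_mean p n (fun _ => c) = c.
Proof.
  induction n as [|n IH].
  - unfold bin_mean, bin_pmf; simpl; ring.
  - rewrite bin_mean_S, IH; ring.
Qed.

Lemma bin_mean_le (p : R) (n : nat) (f g : nat -> R) : 0 <= p <= 1 ->
  (forall i, (i <= n)%nat -> f i <= g i) -> bin_mean p n f <= bin_mean p n g.
Proof.
  intros Hp H; apply sum_lt_le; intros i Hi.
  apply Rmult_le_compat_l; [apply bin_pmf_ge0; auto | apply H; lia].
Qed.

Lemma bin_mean_abs (p : R) (n : nat) (f : nat -> R) : 0 <= p <= 1 ->
  Rabs (bin_mean p n f) <= bin_mean p n (fun i => Rabs (f i)).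
Proof.
  intros Hp; eapply Rle_trans; [apply sum_lt_abs | apply sum_lt_le]; intros i _.
  rewrite Rabs_mult, (Rabs_right (bin_pmf p n i)); [lra | apply Rle_ge, bin_pmf_ge0; auto].
Qed.

Lemma bin_mean_pgf (p : R) (n : nat) (t : R) :
  bin_mean p n (fun i => t ^ i) = (1 - p + p * t) ^ n.
Proof.
  induction n as [|n IH].
  - unfold bin_mean, bin_pmf; simpl; ring.
  - rewrite bin_mean_S, (bin_mean_ext p n (fun i => t ^ S i) (fun i => t * t ^ i))
      by (intros; simpl; ring).
    rewrite bin_mean_scal; change (pow t) with (fun i => t ^ i); cbv beta.
    rewrite IH; simpl; ring.
Qed.

Lemma bin_mean_at_0 (p : R) (n : nat) (c : R) :
  bin_mean p n (fun i => match i with O => c | S _ => 0 end) = (1 - p) ^ n * c.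
Proof.
  unfold bin_mean; rewrite sum_lt_shift.
  rewrite (sum_lt_ext _ (fun _ => 0 * 0)) by (intros; ring).
  rewrite sum_lt_scal; unfold bin_pmf; rewrite binom_0_r, Nat.sub_0_r; ring.
Qed.

Definition inv_rpow (r : R) (i : nat) : R :=
  match i with O => 0 | S _ => Rpower (INR i) (- r) end.

Definition inv_pow (r i : nat) : R := match i with O => 0 | S _ => / INR i ^ r end.

Lemma f_r_bin_mean (p r : R) (n : nat) : f_r p r n = bin_mean p n (inv_rpow r).
Proof.
  unfold f_r, bin_mean; rewrite fold_right_map_seq, sum_lt_shift; simpl inv_rpow at 1.
  rewrite Rmult_0_r, Rplus_0_l; apply sum_lt_ext; intros i Hi.
  unfold bin_pmf; rewrite binom_eq_C by lia; reflexivity.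
Qed.

Lemma inv_rpow_INR (r i : nat) : inv_rpow (INR r) i = inv_pow r i.
Proof.
  destruct i as [|j]; [reflexivity|]; unfold inv_rpow, inv_pow.
  rewrite Rpower_Ropp, Rpower_pow; auto; apply lt_0_INR; lia.
Qed.

Lemma f_r_INR (p : R) (r n : nat) : f_r p (INR r) n = bin_mean p n (inv_pow r).
Proof. rewrite f_r_bin_mean; apply bin_mean_ext; intros; apply inv_rpow_INR. Qed.

Lemma sum_f_R0_sum_lt (f : nat -> R) (n : nat) : sum_f_R0 f n = sum_lt f (S n).
Proof. induction n; simpl in *; try rewrite IHn; ring. Qed.

Lemma pow_add_binom (x y : R) (k : nat) :
  (x + y) ^ k = sum_lt (fun j => binom k j * y ^ (k - j) * x ^ j) (S k).
Proof.
  rewrite binomial, sum_f_R0_sum_lt; apply sum_lt_ext; intros j Hj.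
  rewrite binom_eq_C by lia; ring.
Qed.

Definition cmoment (p : R) (n k : nat) : R :=
  bin_mean p n (fun i => (INR i - INR n * p) ^ k).

Lemma bin_mean_centered_poly (p : R) (n : nat) (a : nat -> R) (K : nat) :
  bin_mean p n (fun i => sum_lt (fun j => a j * (INR i - INR n * p) ^ j) K)
  = sum_lt (fun j => a j * cmoment p n j) K.
Proof.
  rewrite bin_mean_sum; apply sum_lt_ext; intros j _; apply bin_mean_scal.
Qed.

Lemma cmoment_S (p : R) (n k : nat) :
  cmoment p (S n) k
  = sum_lt (fun j => binom k j * ((1 - p) * (- p) ^ (k - j) + p * (1 - p) ^ (k - j))
                     * cmoment p n j) (S k).
Proof.
  unfold cmoment at 1; rewrite bin_mean_S.
  rewrite (bin_mean_ext p n (fun i => (INR i - INR (S n) * p) ^ k)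
             (fun i => (INR i - INR n * p + - p) ^ k)) by (intros; rewrite S_INR; f_equal; ring).
  rewrite (bin_mean_ext p n (fun i => (INR (S i) - INR (S n) * p) ^ k)
             (fun i => (INR i - INR n * p + (1 - p)) ^ k))
    by (intros; rewrite !S_INR; f_equal; ring).
  rewrite !(bin_mean_ext p n (fun i => (INR i - INR n * p + _) ^ k)
             (fun i => sum_lt (fun j => _ * (INR i - INR n * p) ^ j) (S k)))
    by (intros; rewrite pow_add_binom; apply sum_lt_ext; intros; reflexivity).
  rewrite !bin_mean_centered_poly, <- !sum_lt_scal, <- sum_lt_plus.
  apply sum_lt_ext; intros; ring.
Qed.

Lemma cmoment_0 (p : R) (n : nat) : cmoment p n 0 = 1.
Proof. unfold cmoment; simpl; apply bin_mean_const. Qed.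

#[local] Hint Rewrite cmoment_0 : cmoment.

Ltac cmoment_by_induction n :=
  induction n as [|n IH];
  [ unfold cmoment, bin_mean, bin_pmf; simpl; ring
  | rewrite cmoment_S; simpl sum_lt; simpl binom; simpl Nat.sub;
    autorewrite with cmoment; rewrite IH, ?S_INR; ring ].

Lemma cmoment_1 (p : R) (n : nat) : cmoment p n 1 = 0.
Proof. cmoment_by_induction n. Qed.

#[local] Hint Rewrite cmoment_1 : cmoment.

Lemma cmoment_2 (p : R) (n : nat) : cmoment p n 2 = INR n * p * (1 - p).
Proof. cmoment_by_induction n. Qed.

#[local] Hint Rewrite cmoment_2 : cmoment.

Lemma cmoment_3 (p : R) (n : nat) :
  cmoment p n 3 = INR n * p * (1 - p) * (1 - 2 * p).
Proof. cmoment_by_induction n. Qed.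

#[local] Hint Rewrite cmoment_3 : cmoment.

Lemma cmoment_4 (p : R) (n : nat) : let v := INR n * p * (1 - p) in
  cmoment p n 4 = 3 * v ^ 2 + v * (1 - 6 * p * (1 - p)).
Proof. cbv zeta; cmoment_by_induction n. Qed.

#[local] Hint Rewrite cmoment_4 : cmoment.

Lemma cmoment_5 (p : R) (n : nat) : let v := INR n * p * (1 - p) in
  cmoment p n 5 = (1 - 2 * p) * (10 * v ^ 2 + v * (1 - 12 * p * (1 - p))).
Proof. cbv zeta; cmoment_by_induction n. Qed.

#[local] Hint Rewrite cmoment_5 : cmoment.

Lemma cmoment_6 (p : R) (n : nat) : let v := INR n * p * (1 - p) in
  cmoment p n 6 = 15 * v ^ 3 + 5 * v ^ 2 * (5 - 26 * p * (1 - p))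
                  + v * (1 - 30 * p * (1 - p) + 120 * (p * (1 - p)) ^ 2).
Proof. cbv zeta; cmoment_by_induction n. Qed.

Lemma INR_ge1 (n : nat) : (1 <= n)%nat -> 1 <= INR n.
Proof. intros Hn; apply (le_INR 1); auto. Qed.

Lemma bigO_inv_pow_plus (E F : nat -> R) (k : nat) :
  bigO_inv_pow E k -> bigO_inv_pow F k -> bigO_inv_pow (fun n => E n + F n) k.
Proof.
  intros [K1 [N1 H1]] [K2 [N2 H2]]; exists (K1 + K2), (max N1 N2); intros n Hn.
  specialize (H1 n ltac:(lia)); specialize (H2 n ltac:(lia)).
  eapply Rle_trans; [apply Rabs_triang|]; unfold Rdiv in *; lra.
Qed.

Lemma bigO_inv_pow_scal (c : R) (E : nat -> R) (k : nat) :
  bigO_inv_pow E k -> bigO_inv_pow (fun n => c * E n) k.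
Proof.
  intros [K [N HK]]; exists (Rabs c * K), N; intros n Hn.
  rewrite Rabs_mult; unfold Rdiv; rewrite Rmult_assoc.
  apply Rmult_le_compat_l; [apply Rabs_pos | apply HK; auto].
Qed.

Lemma bigO_inv_pow_dominated (E F : nat -> R) (k : nat) :
  (forall n, (1 <= n)%nat -> Rabs (E n) <= Rabs (F n)) ->
  bigO_inv_pow F k -> bigO_inv_pow E k.
Proof.
  intros Hle [K [N HK]]; exists K, (max N 1); intros n Hn.
  apply Rle_trans with (Rabs (F n)); [apply Hle | apply HK]; lia.
Qed.

Lemma bigO_inv_pow_ext (E F : nat -> R) (k : nat) :
  (forall n, (1 <= n)%nat -> E n = F n) -> bigO_inv_pow F k -> bigO_inv_pow E k.
Proof. intros Heq; apply bigO_inv_pow_dominated; intros n Hn; rewrite Heq by auto; lra. Qed.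

Lemma bigO_inv_pow_mult (s E : nat -> R) (c : R) (j k : nat) :
  (forall n, (1 <= n)%nat -> Rabs (s n) <= c * INR n ^ j) ->
  bigO_inv_pow E (j + k) -> bigO_inv_pow (fun n => s n * E n) k.
Proof.
  intros Hs [K [N HK]]; exists (c * K), (max N 1); intros n Hn.
  pose proof (INR_ge1 n ltac:(lia)) as Hn1.
  assert (0 < INR n ^ j) by (apply pow_lt; lra).
  assert (0 < INR n ^ k) by (apply pow_lt; lra).
  specialize (HK n ltac:(lia)); specialize (Hs n ltac:(lia)).
  rewrite pow_add in HK; rewrite Rabs_mult.
  apply Rle_trans with (c * INR n ^ j * (K / (INR n ^ j * INR n ^ k))).
  - apply Rmult_le_compat; auto using Rabs_pos.
  - right; field; lra.
Qed.

Lemma derivable_bounded (f : R -> R) (a b : R) :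
  (forall x, a <= x <= b -> ex_derive f x) ->
  exists M, forall x, a <= x <= b -> Rabs (f x) <= M.
Proof.
  intros Hf; destruct (bounded_continuity f a b) as [M HM].
  { intros x Hx; apply ex_derive_continuous, Hf; auto. }
  exists M; intros x Hx; left; apply HM; auto.
Qed.

Lemma inv_pow_mul_bounded (S : R -> R) (M : R) (k i : nat) :
  (forall y, 0 <= y <= 1 -> Rabs (S y) <= M) -> (1 <= i)%nat ->
  Rabs ((/ INR i) ^ k * S (/ INR i)) <= M / INR i ^ k.
Proof.
  intros HM Hi; pose proof (INR_ge1 i Hi).
  rewrite Rabs_mult, Rabs_right, pow_inv
    by (apply Rle_ge, pow_le; left; apply Rinv_0_lt_compat; lra).
  unfold Rdiv; rewrite Rmult_comm; apply Rmult_le_compat_r.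
  - left; apply Rinv_0_lt_compat, pow_lt; lra.
  - apply HM; split; [left; apply Rinv_0_lt_compat; lra|].
    rewrite <- Rinv_1; apply Rinv_le_contravar; lra.
Qed.

Lemma bigO_inv_pow_of_derivable (E : nat -> R) (S : R -> R) (k : nat) :
  (forall y, 0 <= y <= 1 -> ex_derive S y) ->
  (forall n, (1 <= n)%nat -> E n = (/ INR n) ^ k * S (/ INR n)) ->
  bigO_inv_pow E k.
Proof.
  intros HS HE; destruct (derivable_bounded S 0 1 HS) as [M HM].
  exists M, 1%nat; intros n Hn; rewrite HE by auto; apply inv_pow_mul_bounded; auto.
Qed.

(* With [s ^ (k+1) = rho] and [1/s = 1 + d], Bernoulli gives [s ^ n <= 1 / (n d)]. *)
Lemma bigO_inv_pow_geom (rho : R) (k : nat) : 0 <= rho < 1 -> bigO_inv_pow (fun n => rho ^ n) k.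
Proof.
  intros Hrho; destruct (Req_dec rho 0) as [->|Hr0].
  { exists 0, 1%nat; intros n Hn; rewrite pow_i by lia; rewrite Rabs_R0; unfold Rdiv; lra. }
  assert (Hk : 0 < INR (S k)) by (apply lt_0_INR; lia).
  set (s := Rpower rho (/ INR (S k))).
  assert (Hs0 : 0 < s) by apply exp_pos.
  assert (Hs1 : s < 1).
  { unfold s, Rpower; rewrite <- exp_0; apply exp_increasing.
    assert (ln rho < 0) by (rewrite <- ln_1; apply ln_increasing; lra).
    assert (0 < / INR (S k)) by (apply Rinv_0_lt_compat; lra); nra. }
  assert (Hsk : s ^ S k = rho).
  { unfold s; rewrite <- Rpower_pow by apply exp_pos.
    rewrite Rpower_mult, Rinv_l by lra; apply Rpower_1; lra. }
  set (d := / s - 1).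
  assert (Hd : 0 < d).
  { unfold d; assert (1 < / s) by (rewrite <- Rinv_1; apply Rinv_lt_contravar; lra); lra. }
  exists (/ d ^ S k), 1%nat; intros n Hn.
  pose proof (INR_ge1 n Hn).
  assert (Hsn : s ^ n <= / (INR n * d)).
  { pose proof (Rle_pow_lin d n ltac:(lra)) as Hb.
    replace (1 + d) with (/ s) in Hb by (unfold d; ring).
    rewrite pow_inv in Hb.
    assert (0 < s ^ n) by (apply pow_lt; lra).
    rewrite <- (Rinv_inv (s ^ n)); apply Rinv_le_contravar; nra. }
  rewrite Rabs_right by (apply Rle_ge, pow_le; lra).
  rewrite <- Hsk, <- pow_mult, Nat.mul_comm, pow_mult.
  apply Rle_trans with ((/ (INR n * d)) ^ S k).
  - apply pow_incr; split; auto; apply pow_le; lra.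
  - rewrite pow_inv, Rpow_mult_distr, Rinv_mult; unfold Rdiv; rewrite Rmult_comm.
    assert (0 < INR n ^ k) by (apply pow_lt; lra).
    apply Rmult_le_compat_l; [left; apply Rinv_0_lt_compat, pow_lt; lra|].
    apply Rinv_le_contravar; auto; simpl; nra.
Qed.

Fixpoint inv_rising (k i : nat) : R :=
  match k with O => 1 | S k' => inv_rising k' (S i) / (INR i + 1) end.

Fixpoint inv_rising_np (p : R) (k n : nat) : R :=
  match k with O => 1 | S k' => inv_rising_np p k' (S n) / ((INR n + 1) * p) end.

Lemma inv_rising_pos (k i : nat) : 0 < inv_rising k i.
Proof.
  revert i; induction k as [|k IH]; intros i; simpl; [lra|].
  pose proof (pos_INR i); apply Rdiv_lt_0_compat; auto; lra.
Qed.

Lemma inv_rising_le_1 (k i : nat) : inv_rising k i <= 1.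
Proof.
  revert i; induction k as [|k IH]; intros i; simpl; [lra|].
  pose proof (pos_INR i); pose proof (inv_rising_pos k (S i)); specialize (IH (S i)).
  apply Rle_trans with (inv_rising k (S i) / 1); [|unfold Rdiv; rewrite Rinv_1; lra].
  apply Rmult_le_compat_l; [lra|]; apply Rinv_le_contravar; lra.
Qed.

Lemma inv_rising_np_pos (p : R) (k n : nat) : 0 < p -> 0 < inv_rising_np p k n.
Proof.
  revert n; induction k as [|k IH]; intros n Hp; simpl; [lra|].
  pose proof (pos_INR n); apply Rdiv_lt_0_compat; auto; nra.
Qed.

Lemma inv_rising_np_le (p : R) (k n : nat) : 0 < p -> (1 <= n)%nat ->
  inv_rising_np p k n <= / (INR n ^ k * p ^ k).
Proof.
  revert n; induction k as [|k IH]; intros n Hp Hn; simpl; [lra|].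
  pose proof (INR_ge1 n Hn); specialize (IH (S n) Hp ltac:(lia)); rewrite S_INR in IH.
  assert (0 < INR n ^ k) by (apply pow_lt; lra); assert (0 < p ^ k) by (apply pow_lt; lra).
  assert (INR n ^ k <= (INR n + 1) ^ k) by (apply pow_incr; lra).
  unfold Rdiv; apply Rle_trans with (/ ((INR n + 1) ^ k * p ^ k) * / ((INR n + 1) * p)).
  - apply Rmult_le_compat_r; [left; apply Rinv_0_lt_compat; nra | auto].
  - rewrite <- Rinv_mult; apply Rinv_le_contravar; [repeat apply Rmult_lt_0_compat; lra|].
    apply Rle_trans with ((INR n + 1) * (INR n + 1) ^ k * (p * p ^ k)); [|right; ring].
    apply Rmult_le_compat_r; [apply Rmult_le_pos; lra | apply Rmult_le_compat; lra].
Qed.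

Lemma inv_pow_le_inv_rising (k : nat) :
  exists c, 0 < c /\ forall i, (1 <= i)%nat -> / INR i ^ k <= c * inv_rising k i.
Proof.
  induction k as [|k [c [Hc Hci]]]; [exists 1; split; [lra | intros; simpl; lra]|].
  exists (c * 2 ^ S k); split; [apply Rmult_lt_0_compat; auto; apply pow_lt; lra|].
  intros i Hi; simpl inv_rising; specialize (Hci (S i) ltac:(lia)); rewrite S_INR in Hci.
  pose proof (INR_ge1 i Hi).
  assert (Hshift : / (INR i + 1) ^ S k <= c * (inv_rising k (S i) / (INR i + 1))).
  { simpl; rewrite Rinv_mult; unfold Rdiv.
    rewrite (Rmult_comm (inv_rising _ _)), <- Rmult_assoc, (Rmult_comm c), Rmult_assoc.
    apply Rmult_le_compat_l; [left; apply Rinv_0_lt_compat; lra | auto]. }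
  assert (Hhalf : / INR i ^ S k <= 2 ^ S k * / (INR i + 1) ^ S k).
  { rewrite <- !pow_inv, <- Rpow_mult_distr; apply pow_incr; split.
    - left; apply Rinv_0_lt_compat; lra.
    - apply (Rmult_le_reg_l (INR i * (INR i + 1))); [nra | field_simplify; lra]. }
  assert (0 <= 2 ^ S k) by (apply pow_le; lra); nra.
Qed.

(* Absorption [binom (n+1) (i+1) = binom n i (n+1)/(i+1)] shifts the distribution. *)
Lemma bin_mean_absorb (p : R) (n : nat) (h : nat -> R) : 0 < p ->
  bin_mean p n (fun i => h (S i) / (INR i + 1))
  = (bin_mean p (S n) h - (1 - p) ^ S n * h O) / ((INR n + 1) * p).
Proof.
  intros Hp; unfold bin_mean at 2; rewrite sum_lt_shift.
  replace (bin_pmf p (S n) 0) with ((1 - p) ^ S n)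
    by (unfold bin_pmf; rewrite binom_0_r; simpl; ring).
  set (tail := sum_lt (fun i => bin_pmf p (S n) (S i) * h (S i)) (S n)).
  replace ((1 - p) ^ S n * h O + tail - (1 - p) ^ S n * h O) with tail by ring.
  unfold tail, Rdiv at 2; rewrite Rmult_comm, <- sum_lt_scal; apply sum_lt_ext; intros i Hi.
  pose proof (pos_INR i); pose proof (pos_INR n).
  unfold bin_pmf; replace (S n - S i)%nat with (n - i)%nat by lia.
  replace (binom (S n) (S i)) with (binom n i * (INR n + 1) / (INR i + 1))
    by (rewrite binom_absorb; field; lra).
  simpl; field; lra.
Qed.

Lemma bin_mean_inv_rising_S (p : R) (k n : nat) : 0 < p ->
  bin_mean p n (inv_rising (S k))
  = (bin_mean p (S n) (inv_rising k) - (1 - p) ^ S n * inv_rising k O) / ((INR n + 1) * p).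
Proof. intros Hp; rewrite <- bin_mean_absorb by auto; reflexivity. Qed.

Lemma bin_mean_inv_rising_approx (p : R) (k : nat) : 0 < p < 1 ->
  exists D, 0 <= D /\ forall n,
    Rabs (bin_mean p n (inv_rising k) - inv_rising_np p k n) <= D * (1 - p) ^ n.
Proof.
  intros Hp; induction k as [|k [D [HD HDn]]].
  { exists 0; split; [lra|]; intros n; simpl; rewrite bin_mean_const, Rminus_diag, Rabs_R0; lra. }
  exists ((D + 1) / p); split; [apply Rdiv_le_0_compat; lra|]; intros n.
  rewrite bin_mean_inv_rising_S by lra; simpl inv_rising_np.
  pose proof (pos_INR n); pose proof (inv_rising_pos k 0); pose proof (inv_rising_le_1 k 0).
  assert (Hq : 0 <= (1 - p) ^ n) by (apply pow_le; lra).
  set (e := bin_mean p (S n) (inv_rising k) - inv_rising_np p k (S n)).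
  assert (He : Rabs (e - (1 - p) ^ S n * inv_rising k 0) <= (D + 1) * (1 - p) ^ n).
  { specialize (HDn (S n)); fold e in HDn; simpl pow in *.
    assert (Hb : 0 <= (1 - p) * (1 - p) ^ n * inv_rising k 0) by (repeat apply Rmult_le_pos; lra).
    assert ((1 - p) * (1 - p) ^ n * inv_rising k 0 <= (1 - p) ^ n).
    { apply Rle_trans with (1 * (1 - p) ^ n * 1); [|lra].
      apply Rmult_le_compat; [apply Rmult_le_pos; lra | lra | apply Rmult_le_compat_r; lra | lra]. }
    assert (D * ((1 - p) * (1 - p) ^ n) <= D * (1 - p) ^ n) by (apply Rmult_le_compat_l; nra).
    eapply Rle_trans; [apply Rabs_triang|]; rewrite Rabs_Ropp, (Rabs_right _ (Rle_ge _ _ Hb)).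
    lra. }
  replace (_ / _ - _ / _) with ((e - (1 - p) ^ S n * inv_rising k 0) / ((INR n + 1) * p))
    by (unfold e; field; lra).
  unfold Rdiv; rewrite Rabs_mult, (Rabs_right (/ _))
    by (apply Rle_ge, Rlt_le, Rinv_0_lt_compat; nra).
  assert (Hinv : / ((INR n + 1) * p) <= / p) by (apply Rinv_le_contravar; nra).
  apply Rle_trans with ((D + 1) * (1 - p) ^ n * / p); [|right; ring].
  apply Rmult_le_compat; auto; [apply Rabs_pos | left; apply Rinv_0_lt_compat; nra].
Qed.

Lemma bin_mean_inv_rising_bigO (p : R) (k j : nat) : 0 < p < 1 ->
  bigO_inv_pow (fun n => bin_mean p n (inv_rising k) - inv_rising_np p k n) j.
Proof.
  intros Hp; destruct (bin_mean_inv_rising_approx p k Hp) as [D [HD HDn]].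
  apply (bigO_inv_pow_dominated _ (fun n => D * (1 - p) ^ n)).
  - intros n _; rewrite (Rabs_right (D * _)); auto.
    apply Rle_ge, Rmult_le_pos; auto; apply pow_le; lra.
  - apply bigO_inv_pow_scal, bigO_inv_pow_geom; lra.
Qed.

Lemma bin_mean_inv_rising_sum_bigO (p : R) (a : nat -> R) (K j : nat) : 0 < p < 1 ->
  bigO_inv_pow (fun n => bin_mean p n (fun i => sum_lt (fun k => a k * inv_rising k i) K)
                         - sum_lt (fun k => a k * inv_rising_np p k n) K) j.
Proof.
  intros Hp; induction K as [|K IH].
  - exists 0, O; intros n _; simpl; rewrite bin_mean_const, Rminus_diag, Rabs_R0.
    unfold Rdiv; lra.
  - eapply bigO_inv_pow_ext.
    2:{ eapply bigO_inv_pow_plus; [exact IH|].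
        apply (bigO_inv_pow_scal (a K)), (bin_mean_inv_rising_bigO p K j Hp). }
    intros n _; simpl; rewrite bin_mean_plus, bin_mean_scal.
    rewrite !(bin_mean_sum p n (fun k i => a k * inv_rising k i)); ring.
Qed.

(* If [g i = O(i^-k)], then [E g(X_n) = O(n^-k)]: near [0] the binomial mass is
   exponentially small, and [i^-k] is dominated by the inverse rising factorial,
   whose mean is known up to an exponentially small error. *)
Lemma bin_mean_bigO (p M : R) (g : nat -> R) (k : nat) : 0 < p < 1 ->
  (forall i, (1 <= i)%nat -> Rabs (g i) <= M / INR i ^ k) ->
  bigO_inv_pow (fun n => bin_mean p n g) k.
Proof.
  intros Hp Hg.
  assert (HM : 0 <= M).
  { specialize (Hg 1%nat (le_n 1)); rewrite INR_1, pow1 in Hg.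
    pose proof (Rabs_pos (g 1%nat)); unfold Rdiv in Hg; rewrite Rinv_1 in Hg; lra. }
  destruct (inv_pow_le_inv_rising k) as [c [Hc Hci]].
  set (g1 := fun i => match i with O => 0 | S _ => g i end).
  apply (bigO_inv_pow_ext _ (fun n => bin_mean p n g1 + (1 - p) ^ n * g O)).
  { intros n _; rewrite <- bin_mean_at_0, <- bin_mean_plus.
    apply bin_mean_ext; intros [|i] _; simpl; ring. }
  apply bigO_inv_pow_plus.
  2:{ apply (bigO_inv_pow_ext _ (fun n => g O * (1 - p) ^ n)); [intros; ring|].
      apply bigO_inv_pow_scal, bigO_inv_pow_geom; lra. }
  apply (bigO_inv_pow_dominated _ (fun n => M * c * bin_mean p n (inv_rising k))).
  - intros n _; eapply Rle_trans; [apply bin_mean_abs; lra|].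
    rewrite <- bin_mean_scal; eapply Rle_trans; [|apply Rle_abs].
    apply bin_mean_le; [lra|]; intros [|i] _; simpl g1.
    + rewrite Rabs_R0; pose proof (inv_rising_pos k 0); assert (0 <= M * c) by nra; nra.
    + eapply Rle_trans; [apply Hg; lia|]; specialize (Hci (S i) ltac:(lia)).
      unfold Rdiv; rewrite Rmult_assoc; apply Rmult_le_compat_l; auto.
  - apply bigO_inv_pow_scal.
    apply (bigO_inv_pow_ext _ (fun n => inv_rising_np p k n
                                        + (bin_mean p n (inv_rising k) - inv_rising_np p k n)));
      [intros; ring|].
    apply bigO_inv_pow_plus; [|apply bin_mean_inv_rising_bigO; auto].
    exists (/ p ^ k), 1%nat; intros n Hn.
    pose proof (INR_ge1 n Hn); pose proof (inv_rising_np_le p k n ltac:(lra) Hn).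
    rewrite Rabs_right by (apply Rle_ge, Rlt_le, inv_rising_np_pos; lra).
    rewrite Rinv_mult in *; unfold Rdiv; lra.
Qed.

Lemma scale_pow_le (p : R) (r n : nat) : 0 < p < 1 ->
  Rabs ((INR n * p) ^ r) <= 1 * INR n ^ r.
Proof.
  intros Hp; pose proof (pos_INR n).
  rewrite Rabs_right, Rmult_1_l, Rpow_mult_distr by (apply Rle_ge, pow_le; nra).
  assert (p ^ r <= 1) by (rewrite <- (pow1 r); apply pow_incr; lra).
  pose proof (pow_le (INR n) r H); pose proof (pow_le p r ltac:(lra)); nra.
Qed.

(* Integer exponents: expand [i^-r] in inverse rising factorials up to an
   [O(i^-(K+1))] remainder [y^(K+1) Ri(y)], [y = 1/i]; the expansion of the
   resulting main term in powers of [1/(np)] has remainder [y^(K+1) Rn(y)],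
   [y = 1/n]. *)
Lemma inv_pow_mean_expansion (p : R) (r K : nat) (a T : nat -> R) (Ri Rn : R -> R) :
  0 < p < 1 -> (r <= S K)%nat ->
  (forall y, 0 <= y <= 1 -> ex_derive Ri y) ->
  (forall y, 0 <= y <= 1 -> ex_derive Rn y) ->
  (forall i, (1 <= i)%nat ->
     / INR i ^ r - sum_lt (fun k => a k * inv_rising k i) (S K) = (/ INR i) ^ S K * Ri (/ INR i)) ->
  (forall n, (1 <= n)%nat ->
     sum_lt (fun k => a k * inv_rising_np p k n) (S K) - / (INR n * p) ^ r * T n
     = (/ INR n) ^ S K * Rn (/ INR n)) ->
  bigO_inv_pow (fun n => (INR n * p) ^ r * bin_mean p n (inv_pow r) - T n) (S K - r).
Proof.
  intros Hp Hr HRi HRn Hrem Hmain.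
  set (main := fun n => sum_lt (fun k => a k * inv_rising_np p k n) (S K)).
  set (rem := fun i => inv_pow r i - sum_lt (fun k => a k * inv_rising k i) (S K)).
  assert (Hdiff : bigO_inv_pow (fun n => bin_mean p n (inv_pow r) - / (INR n * p) ^ r * T n) (S K)).
  { apply (bigO_inv_pow_ext _
      (fun n => (bin_mean p n (fun i => sum_lt (fun k => a k * inv_rising k i) (S K)) - main n)
                + bin_mean p n rem + (main n - / (INR n * p) ^ r * T n))).
    { intros n _; unfold rem; rewrite bin_mean_minus; ring. }
    apply bigO_inv_pow_plus; [apply bigO_inv_pow_plus|].
    - apply bin_mean_inv_rising_sum_bigO; auto.
    - destruct (derivable_bounded Ri 0 1 HRi) as [M HM].
      apply (bin_mean_bigO p M); auto; intros [|i] Hi; [lia|].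
      unfold rem; change (inv_pow r (S i)) with (/ INR (S i) ^ r).
      rewrite Hrem by auto; apply inv_pow_mul_bounded; auto.
    - apply (bigO_inv_pow_of_derivable _ Rn); auto. }
  apply (bigO_inv_pow_ext _ (fun n => (INR n * p) ^ r
                                      * (bin_mean p n (inv_pow r) - / (INR n * p) ^ r * T n))).
  { intros n Hn; pose proof (INR_ge1 n Hn).
    assert ((INR n * p) ^ r <> 0) by (apply pow_nonzero; nra); field; auto. }
  apply (bigO_inv_pow_mult _ _ 1 r); [intros; apply scale_pow_le; auto|].
  now replace (r + (S K - r))%nat with (S K) by lia.
Qed.

(* Unsigned Stirling numbers of the first kind [[n k]], the coefficients of the
   factorial series [1/i^r = sum_(k >= r) [k r] inv_rising k i]. *)
Fixpoint stirling1 (n k : nat) : R :=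
  match n, k with
  | O, O => 1
  | O, S _ => 0
  | S _, O => 0
  | S n', S k' => INR n' * stirling1 n' (S k') + stirling1 n' k'
  end.

Ltac derivable_rational :=
  intros ?y ?Hy; auto_derive;
  repeat split; repeat apply Rmult_integral_contrapositive_currified; lra.

Ltac expansion_identity :=
  let Hn := fresh in
  intros ?n Hn; pose proof (INR_ge1 _ Hn);
  cbn [sum_lt inv_rising inv_rising_np stirling1]; rewrite ?S_INR, ?INR_0;
  field; repeat split; lra.

(* The remainder functions below are exact, found by computer algebra; the
   identities they satisfy are checked by [field]. *)
Definition bracket1 (p : R) (n : nat) : R :=
  let q := 1 - p in
  1 + q / (INR n * p) + q * (1 + q) / (INR n * p) ^ 2
  + q * (1 + 4 * q + q ^ 2) / (INR n * p) ^ 3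
  + q * (1 + q) * (1 + 10 * q + q ^ 2) / (INR n * p) ^ 4
  + q * (1 + 26 * q + 66 * q ^ 2 + 26 * q ^ 3 + q ^ 4) / (INR n * p) ^ 5.

Definition inv_pow_rem1 (y : R) : R :=
  720 / ((1 + y) * (1 + 2 * y) * (1 + 3 * y) * (1 + 4 * y) * (1 + 5 * y) * (1 + 6 * y)).

Definition bracket_rem1 (p y : R) : R :=
  (- 2520 + 3360*p - 2100*p^2 + 602*p^3 - 63*p^4 + p^5 - 21000*y + 45360*y*p - 33894*y*p^2
   + 10710*y*p^3 - 1196*y*p^4 + 20*y*p^5 - 88200*y^2 + 225624*y^2*p - 199794*y^2*p^2
   + 70828*y^2*p^3 - 8613*y^2*p^4 + 155*y^2*p^5 - 194880*y^3 + 542304*y^3*p - 531840*y^3*p^2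
   + 212760*y^3*p^3 - 28924*y^3*p^4 + 580*y^3*p^5 - 211680*y^4 + 617760*y^4*p
   - 644760*y^4*p^2 + 281520*y^4*p^3 - 43884*y^4*p^4 + 1044*y^4*p^5 - 86400*y^5
   + 259200*y^5*p - 280800*y^5*p^2 + 129600*y^5*p^3 - 22320*y^5*p^4 + 720*y^5*p^5) /
  (p ^ 6 * ((1 + 1*y)*(1 + 2*y)*(1 + 3*y)*(1 + 4*y)*(1 + 5*y)*(1 + 6*y))).

Lemma f_r_1_bigO (p : R) : 0 < p < 1 ->
  bigO_inv_pow (fun n => INR n * p * f_r p 1 n - bracket1 p n) 6.
Proof.
  intros Hp.
  apply (bigO_inv_pow_ext _ (fun n => (INR n * p) ^ 1 * bin_mean p n (inv_pow 1) - bracket1 p n)).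
  { intros n _; now rewrite <- f_r_INR, pow_1. }
  apply (inv_pow_mean_expansion p 1 6 (fun k => stirling1 k 1) _ inv_pow_rem1 (bracket_rem1 p));
    [auto | lia | | | |].
  - unfold inv_pow_rem1; derivable_rational.
  - unfold bracket_rem1; pose proof (pow_lt p 6 ltac:(lra)); derivable_rational.
  - unfold inv_pow_rem1; expansion_identity.
  - unfold bracket1, bracket_rem1; expansion_identity.
Qed.

Definition bracket2 (p : R) (n : nat) : R :=
  let q := 1 - p in
  1 + 3 * q / (INR n * p) + q * (4 + 7 * q) / (INR n * p) ^ 2
  + 5 * q * (1 + 6 * q + 3 * q ^ 2) / (INR n * p) ^ 3
  + q * (6 + 91 * q + 146 * q ^ 2 + 31 * q ^ 3) / (INR n * p) ^ 4.

Definition inv_pow_rem2 (y : R) : R :=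
  (1764 + 720*y) / ((1 + y)*(1 + 2*y)*(1 + 3*y)*(1 + 4*y)*(1 + 5*y)*(1 + 6*y)).

Definition bracket_rem2 (p y : R) : R :=
  (- 5754 + 7000*p - 3850*p^2 + 903*p^3 - 63*p^4 - 47950*y + 94500*y*p - 62139*y*p^2
   + 16065*y*p^3 - 1196*y*p^4 - 201390*y^2 + 470050*y^2*p - 366289*y^2*p^2 + 106242*y^2*p^3
   - 8613*y^2*p^4 - 444976*y^3 + 1129800*y^3*p - 975040*y^3*p^2 + 319140*y^3*p^3
   - 28924*y^3*p^4 - 483336*y^4 + 1287000*y^4*p - 1182060*y^4*p^2 + 422280*y^4*p^3
   - 43884*y^4*p^4 - 197280*y^5 + 540000*y^5*p - 514800*y^5*p^2 + 194400*y^5*p^3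
   - 22320*y^5*p^4) /
  (p ^ 6 * ((1 + 1*y)*(1 + 2*y)*(1 + 3*y)*(1 + 4*y)*(1 + 5*y)*(1 + 6*y))).

Lemma f_r_2_bigO (p : R) : 0 < p < 1 ->
  bigO_inv_pow (fun n => (INR n * p) ^ 2 * f_r p 2 n - bracket2 p n) 5.
Proof.
  intros Hp.
  apply (bigO_inv_pow_ext _ (fun n => (INR n * p) ^ 2 * bin_mean p n (inv_pow 2) - bracket2 p n)).
  { intros n _; rewrite <- f_r_INR; simpl INR; do 3 f_equal; ring. }
  apply (inv_pow_mean_expansion p 2 6 (fun k => stirling1 k 2) _ inv_pow_rem2 (bracket_rem2 p));
    [auto | lia | | | |].
  - unfold inv_pow_rem2; derivable_rational.
  - unfold bracket_rem2; pose proof (pow_lt p 6 ltac:(lra)); derivable_rational.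
  - unfold inv_pow_rem2; expansion_identity.
  - unfold bracket2, bracket_rem2; expansion_identity.
Qed.

Definition bracket3 (p : R) (n : nat) : R :=
  let q := 1 - p in
  1 + 6 * q / (INR n * p) + 5 * q * (2 + 5 * q) / (INR n * p) ^ 2
  + 15 * q * (1 + 8 * q + 6 * q ^ 2) / (INR n * p) ^ 3
  + 7 * q * (3 + 58 * q + 128 * q ^ 2 + 43 * q ^ 3) / (INR n * p) ^ 4.

Definition inv_pow_rem3 (y : R) : R :=
  (13132 + 13068*y + 5040*y^2)
  / ((1 + y)*(1 + 2*y)*(1 + 3*y)*(1 + 4*y)*(1 + 5*y)*(1 + 6*y)*(1 + 7*y)).

Definition bracket_rem3 (p y : R) : R :=
  (- 45472 + 59850*p - 36750*p^2 + 10206*p^3 - 966*p^4 - 522928*y + 1080450*y*p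
   - 785715*y*p^2 + 239148*y*p^3 - 24023*y*p^4 - 3183040*y^2 + 7737975*y^2*p
   - 6509895*y^2*p^2 + 2185602*y^2*p^3 - 235682*y^2*p^4 - 10992856*y^3 + 29028825*y^3*p
   - 26731180*y^3*p^2 + 9847260*y^3*p^3 - 1152049*y^3*p^4 - 21326368*y^4 + 59108400*y^4*p
   - 57662500*y^4*p^2 + 22783080*y^4*p^3 - 2902612*y^4*p^4 - 21222432*y^5 + 60612300*y^5*p
   - 61387200*y^5*p^2 + 25477200*y^5*p^3 - 3479868*y^5*p^4 - 8184960*y^6 + 23814000*y^6*p
   - 24696000*y^6*p^2 + 10584000*y^6*p^3 - 1517040*y^6*p^4) /
  (p ^ 7 * ((1 + 1*y)*(1 + 2*y)*(1 + 3*y)*(1 + 4*y)*(1 + 5*y)*(1 + 6*y)*(1 + 7*y))).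

Lemma f_r_3_bigO (p : R) : 0 < p < 1 ->
  bigO_inv_pow (fun n => (INR n * p) ^ 3 * f_r p 3 n - bracket3 p n) 5.
Proof.
  intros Hp.
  apply (bigO_inv_pow_ext _ (fun n => (INR n * p) ^ 3 * bin_mean p n (inv_pow 3) - bracket3 p n)).
  { intros n _; rewrite <- f_r_INR; simpl INR; do 3 f_equal; ring. }
  apply (inv_pow_mean_expansion p 3 7 (fun k => stirling1 k 3) _ inv_pow_rem3 (bracket_rem3 p));
    [auto | lia | | | |].
  - unfold inv_pow_rem3; derivable_rational.
  - unfold bracket_rem3; pose proof (pow_lt p 7 ltac:(lra)); derivable_rational.
  - unfold inv_pow_rem3; expansion_identity.
  - unfold bracket3, bracket_rem3; expansion_identity.
Qed.

(* [neg_falling r k = (-r) (-r-1) ... (-r-k+1)], so that the k-th derivative of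
   [u |-> (1 + s u)^-r] is [neg_falling r k * s^k * (1 + s u)^(-r-k)]. *)
Fixpoint neg_falling (r : R) (k : nat) : R :=
  match k with O => 1 | S k' => neg_falling r k' * (- r - INR k') end.

Lemma locally_affine_pos (s t : R) : 0 < 1 + s * t -> locally t (fun u => 0 < 1 + s * u).
Proof.
  intros Ht; assert (Hc : continuity_pt (fun u => 1 + s * u) t) by reg.
  apply (proj1 (continuity_pt_locally _ _)) with (eps := mkposreal _ Ht) in Hc.
  revert Hc; apply filter_imp; intros u Hu; simpl in Hu; apply Rabs_def2 in Hu; lra.
Qed.

Lemma is_derive_Rpower_affine (s a t : R) : 0 < 1 + s * t ->
  is_derive (fun u => Rpower (1 + s * u) a) t (s * (a * Rpower (1 + s * t) (a - 1))).
Proof.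
  intros Ht.
  assert (Hin : is_derive (fun u => 1 + s * u) t s) by (auto_derive; [auto | ring]).
  assert (Hout : is_derive (fun x => Rpower x a) (1 + s * t) (a * Rpower (1 + s * t) (a - 1)))
    by (apply is_derive_Reals, derivable_pt_lim_power; auto).
  exact (is_derive_comp (fun x => Rpower x a) (fun u => 1 + s * u) t _ _ Hout Hin).
Qed.

Lemma Derive_n_Rpower_affine (s r : R) (k : nat) (t : R) : 0 < 1 + s * t ->
  Derive_n (fun u => Rpower (1 + s * u) (- r)) k t
  = neg_falling r k * s ^ k * Rpower (1 + s * t) (- r - INR k).
Proof.
  revert t; induction k as [|k IH]; intros t Ht.
  - simpl; replace (- r - 0) with (- r) by ring; ring.
  - simpl Derive_n.
    rewrite (Derive_ext_loc _ (fun u => neg_falling r k * s ^ k * Rpower (1 + s * u) (- r - INR k)))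
      by (generalize (locally_affine_pos s t Ht); apply filter_imp; intros; apply IH; auto).
    apply is_derive_unique.
    replace (neg_falling r (S k) * s ^ S k * Rpower (1 + s * t) (- r - INR (S k)))
      with (neg_falling r k * s ^ k
            * (s * ((- r - INR k) * Rpower (1 + s * t) ((- r - INR k) - 1))))
      by (cbn [neg_falling pow]; rewrite S_INR; replace (- r - (INR k + 1)) with (- r - INR k - 1)
            by ring; ring).
    apply (is_derive_scal (fun u => Rpower (1 + s * u) (- r - INR k))).
    apply is_derive_Rpower_affine; auto.
Qed.

Lemma ex_derive_n_Rpower_affine (s r : R) (k : nat) (t : R) : 0 < 1 + s * t ->
  ex_derive_n (fun u => Rpower (1 + s * u) (- r)) k t.
Proof.
  intros Ht; destruct k as [|k]; simpl; auto.
  apply (ex_derive_ext_loc (fun u => neg_falling r k * s ^ k * Rpower (1 + s * u) (- r - INR k))).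
  { generalize (locally_affine_pos s t Ht); apply filter_imp; intros.
    symmetry; apply Derive_n_Rpower_affine; auto. }
  eexists; apply (is_derive_scal (fun u => Rpower (1 + s * u) (- r - INR k))).
  apply is_derive_Rpower_affine; auto.
Qed.

Definition taylor_inv_rpow (r u : R) : R :=
  1 - r * u + r * (r + 1) / 2 * u ^ 2 - r * (r + 1) * (r + 2) / 6 * u ^ 3
  + r * (r + 1) * (r + 2) * (r + 3) / 24 * u ^ 4
  - r * (r + 1) * (r + 2) * (r + 3) * (r + 4) / 120 * u ^ 5.

Lemma Rpower_1_l (x : R) : Rpower 1 x = 1.
Proof. unfold Rpower; rewrite ln_1, Rmult_0_r; apply exp_0. Qed.

Lemma taylor_inv_rpow_affine (r s v : R) :
  sum_f_R0 (fun m => (v - 0) ^ m / INR (fact m)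
                     * Derive_n (fun u => Rpower (1 + s * u) (- r)) m 0) 5
  = taylor_inv_rpow r (s * v).
Proof.
  cbn [sum_f_R0]; rewrite !Derive_n_Rpower_affine by lra.
  rewrite !Rmult_0_r, !Rplus_0_r, !Rpower_1_l; unfold taylor_inv_rpow; simpl; field.
Qed.

Lemma Rpower_le_half (x a : R) : 1 / 2 <= x -> a <= 0 -> Rpower x a <= Rpower (1 / 2) a.
Proof.
  intros Hx Ha; unfold Rpower.
  assert (ln (1 / 2) <= ln x).
  { destruct (Req_dec x (1 / 2)) as [->|Hne]; [lra | left; apply ln_increasing; lra]. }
  assert (Hle : a * ln x <= a * ln (1 / 2)) by nra.
  destruct (Rle_lt_or_eq_dec _ _ Hle) as [Hlt|Heq];
    [left; apply exp_increasing; auto | rewrite Heq; lra].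
Qed.

(* Lagrange remainder on the side of [0] containing [s v], for [s = 1] or [s = -1]. *)
Lemma taylor_inv_rpow_remainder (r s v : R) : 0 < r -> 0 < v -> s * s = 1 -> -1 / 2 <= s * v ->
  Rabs (Rpower (1 + s * v) (- r) - taylor_inv_rpow r (s * v))
  <= Rabs (neg_falling r 6) / 720 * Rpower (1 / 2) (- r - INR 6) * v ^ 6.
Proof.
  intros Hr Hv Hs Hsv.
  assert (Hmid : forall z, 0 <= z <= v -> 1 / 2 <= 1 + s * z).
  { intros z Hz; destruct (Rle_dec 0 s); nra. }
  destruct (Taylor_Lagrange (fun u => Rpower (1 + s * u) (- r)) 5 0 v Hv) as [z [Hz Heq]].
  { intros t Ht k _; apply ex_derive_n_Rpower_affine; pose proof (Hmid t Ht); lra. }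
  rewrite taylor_inv_rpow_affine, Derive_n_Rpower_affine in Heq
    by (pose proof (Hmid z ltac:(lra)); lra).
  replace (s ^ 6) with ((s * s) ^ 3) in Heq by ring; rewrite Hs in Heq.
  rewrite Heq.
  replace (taylor_inv_rpow r (s * v)
           + (v - 0) ^ 6 / INR (fact 6)
             * (neg_falling r 6 * 1 ^ 3 * Rpower (1 + s * z) (- r - INR 6))
           - taylor_inv_rpow r (s * v))
    with (v ^ 6 * (neg_falling r 6 / 720) * Rpower (1 + s * z) (- r - INR 6)) by (simpl; field).
  assert (H6 : 0 <= v ^ 6) by (apply pow_le; lra).
  rewrite !Rabs_mult, (Rabs_right (v ^ 6)), (Rabs_right (Rpower _ _))
    by (apply Rle_ge; auto; left; apply exp_pos).
  unfold Rdiv; rewrite Rabs_mult, (Rabs_right (/ 720)) by lra.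
  pose proof (Rpower_le_half (1 + s * z) (- r - INR 6) (Hmid z ltac:(lra)) ltac:(simpl; lra)).
  assert (0 <= v ^ 6 * (Rabs (neg_falling r 6) * / 720))
    by (apply Rmult_le_pos; auto; apply Rmult_le_pos; [apply Rabs_pos | lra]).
  nra.
Qed.

Lemma taylor_inv_rpow_bound (r : R) : 0 < r -> exists C, 0 <= C /\
  forall u, -1 / 2 <= u -> Rabs (Rpower (1 + u) (- r) - taylor_inv_rpow r u) <= C * u ^ 6.
Proof.
  intros Hr; set (C := Rabs (neg_falling r 6) / 720 * Rpower (1 / 2) (- r - INR 6)).
  exists C; split.
  { apply Rmult_le_pos; [apply Rdiv_le_0_compat; [apply Rabs_pos | lra] | left; apply exp_pos]. }
  intros u Hu; destruct (Rtotal_order u 0) as [Hneg|[->|Hpos]].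
  - pose proof (taylor_inv_rpow_remainder r (-1) (- u) Hr ltac:(lra) ltac:(ring) ltac:(lra)) as H.
    replace (-1 * - u) with u in H by ring; replace ((- u) ^ 6) with (u ^ 6) in H by ring; exact H.
  - unfold taylor_inv_rpow; rewrite Rplus_0_r, Rpower_1_l.
    replace (_ - _) with 0 by ring; rewrite Rabs_R0; simpl; nra.
  - pose proof (taylor_inv_rpow_remainder r 1 u Hr Hpos ltac:(ring) ltac:(lra)) as H.
    rewrite Rmult_1_l in H; exact H.
Qed.

Lemma taylor_inv_rpow_bounded (r p : R) : 0 < p ->
  exists M, 0 <= M /\ forall u, -1 <= u <= / p -> Rabs (taylor_inv_rpow r u) <= M.
Proof.
  intros Hp; destruct (derivable_bounded (taylor_inv_rpow r) (-1) (/ p)) as [M HM].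
  { intros; unfold taylor_inv_rpow; auto_derive; auto. }
  exists (Rabs M); split; [apply Rabs_pos|]; intros u Hu.
  eapply Rle_trans; [apply HM; auto | apply Rle_abs].
Qed.

Definition tail_rate (p : R) : R := Rpower 2 (p / 2) * (1 - p / 2).

Lemma tail_rate_lt_1 (p : R) : 0 < p < 1 -> 0 <= tail_rate p < 1.
Proof.
  intros Hp; unfold tail_rate; split.
  { apply Rmult_le_pos; [left; apply exp_pos | lra]. }
  assert (Hln2 : ln 2 < 1).
  { rewrite <- (ln_exp 1); apply ln_increasing; [lra|].
    pose proof (exp_ineq1 1 ltac:(lra)); lra. }
  assert (H1 : Rpower 2 (p / 2) < exp (p / 2)) by (apply exp_increasing; nra).
  assert (H2 : 1 + - (p / 2) < exp (- (p / 2))) by (apply exp_ineq1; lra).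
  assert (H3 : exp (p / 2) * exp (- (p / 2)) = 1)
    by (rewrite <- exp_plus, Rplus_opp_r; apply exp_0).
  pose proof (exp_pos (p / 2)); pose proof (exp_pos (- (p / 2))).
  apply Rle_lt_trans with (exp (p / 2) * (1 - p / 2)); [apply Rmult_le_compat_r; lra | nra].
Qed.

Lemma bin_mean_tail_weight (p : R) (n : nat) :
  bin_mean p n (fun i => Rpower 2 (INR n * p / 2) * (/ 2) ^ i) = tail_rate p ^ n.
Proof.
  rewrite bin_mean_scal, bin_mean_pgf; unfold tail_rate.
  rewrite Rpow_mult_distr, <- (Rpower_pow n (Rpower 2 (p / 2))) by apply exp_pos.
  rewrite Rpower_mult; replace (1 - p + p * / 2) with (1 - p / 2) by field.
  f_equal; f_equal; field.
Qed.

Lemma tail_weight_ge_1 (m : R) (i : nat) : INR i < m / 2 -> 1 <= Rpower 2 (m / 2) * (/ 2) ^ i.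
Proof.
  intros Hi; rewrite pow_inv, <- Rpower_pow, <- Rpower_Ropp, <- Rpower_plus by lra.
  unfold Rpower; rewrite <- exp_0; left; apply exp_increasing.
  assert (0 < ln 2) by (rewrite <- ln_1; apply ln_increasing; lra); nra.
Qed.

(* For [i >= np/2] this is the Taylor bound at [u = i/(np) - 1]; for smaller [i]
   the weight [2^(np/2 - i) >= 1] absorbs the bounded difference. *)
Lemma inv_rpow_taylor_pointwise (r p C6 MT : R) (n i : nat) :
  0 < r -> 0 < p < 1 -> (1 <= n)%nat -> (i <= n)%nat -> 0 <= C6 -> 0 <= MT ->
  (forall u, -1 / 2 <= u -> Rabs (Rpower (1 + u) (- r) - taylor_inv_rpow r u) <= C6 * u ^ 6) ->
  (forall u, -1 <= u <= / p -> Rabs (taylor_inv_rpow r u) <= MT) ->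
  let m := INR n * p in let u := (INR i - m) / m in
  Rabs (Rpower m r * inv_rpow r i - taylor_inv_rpow r u)
  <= C6 * u ^ 6 + (Rpower m r + MT) * (Rpower 2 (m / 2) * (/ 2) ^ i).
Proof.
  intros Hr Hp Hn Hi HC6 HMT Htaylor HT m u.
  pose proof (INR_ge1 n Hn); assert (Hm : 0 < m) by (unfold m; nra).
  assert (Hmr : 0 < Rpower m r) by apply exp_pos.
  assert (Hw : 0 <= Rpower 2 (m / 2) * (/ 2) ^ i)
    by (apply Rmult_le_pos; [left; apply exp_pos | apply pow_le; lra]).
  assert (Hu6 : 0 <= C6 * u ^ 6)
    by (apply Rmult_le_pos; auto; replace (u ^ 6) with ((u ^ 3) ^ 2) by ring; apply pow2_ge_0).
  assert (Hiu : INR i = m * (1 + u)) by (unfold u; field; lra).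
  destruct (Rle_lt_dec (-1 / 2) u) as [Hu|Hu].
  - destruct i as [|j]; [simpl in Hiu; nra|].
    unfold inv_rpow; clearbody u.
    replace (Rpower m r * Rpower (INR (S j)) (- r)) with (Rpower (1 + u) (- r)).
    + assert (0 <= (Rpower m r + MT) * (Rpower 2 (m / 2) * (/ 2) ^ S j))
        by (apply Rmult_le_pos; lra).
      specialize (Htaylor u Hu); lra.
    + rewrite Hiu, <- Rpower_mult_distr by lra; rewrite !Rpower_Ropp.
      field; split; apply Rgt_not_eq, exp_pos.
  - assert (Hsmall : 0 <= Rpower m r * inv_rpow r i <= Rpower m r).
    { unfold inv_rpow; destruct i as [|j]; [lra|].
      assert (Rpower (INR (S j)) (- r) <= 1).
      { rewrite <- (Rpower_O (INR (S j))) by (apply lt_0_INR; lia).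
        apply Rle_Rpower; [apply (le_INR 1); lia | lra]. }
      assert (0 < Rpower (INR (S j)) (- r)) by apply exp_pos.
      split; [apply Rmult_le_pos; lra|].
      apply Rle_trans with (Rpower m r * 1); [apply Rmult_le_compat_l | ]; lra. }
    assert (HTu : Rabs (taylor_inv_rpow r u) <= MT).
    { apply HT; split; [pose proof (pos_INR i); nra|].
      assert (INR i <= INR n) by (apply le_INR; auto).
      apply (Rmult_le_reg_r m); auto.
      replace (u * m) with (INR i - m) by (unfold u; field; lra).
      replace (/ p * m) with (INR n) by (unfold m; field; lra); lra. }
    pose proof (tail_weight_ge_1 m i ltac:(nra)).
    eapply Rle_trans; [unfold Rminus; apply Rabs_triang|]; rewrite Rabs_Ropp, Rabs_right by lra.
    nra.
Qed.

Definition bracket_r (r p : R) (n : nat) : R :=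
  let q := 1 - p in
  1 + r * (r + 1) * q / (2 * (INR n * p))
  + r * (r + 1) * (r + 2) * q * (4 + q + 3 * r * q) / (24 * (INR n * p) ^ 2).

Definition taylor_mean_rem (r p y : R) : R :=
  r * (r + 1) * (r + 2) * (r + 3) / 24 * (1 - p) * (1 - 6 * p * (1 - p)) / p ^ 3
  - r * (r + 1) * (r + 2) * (r + 3) * (r + 4) / 120 *
    (y * (p - 15 * p ^ 2 + 50 * p ^ 3 - 60 * p ^ 4 + 24 * p ^ 5)
     + (10 * p ^ 2 - 40 * p ^ 3 + 50 * p ^ 4 - 20 * p ^ 5)) / p ^ 5.

Lemma bin_mean_taylor_inv_rpow (r p : R) (n : nat) : 0 < p -> (1 <= n)%nat ->
  bin_mean p n (fun i => taylor_inv_rpow r ((INR i - INR n * p) / (INR n * p))) - bracket_r r p n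
  = (/ INR n) ^ 3 * taylor_mean_rem r p (/ INR n).
Proof.
  intros Hp Hn; pose proof (INR_ge1 n Hn); set (m := INR n * p).
  set (c := fun j => nth j [1; - r / m; r * (r + 1) / 2 / m ^ 2;
           - (r * (r + 1) * (r + 2) / 6) / m ^ 3; r * (r + 1) * (r + 2) * (r + 3) / 24 / m ^ 4;
           - (r * (r + 1) * (r + 2) * (r + 3) * (r + 4) / 120) / m ^ 5] 0).
  rewrite (bin_mean_ext p n _ (fun i => sum_lt (fun j => c j * (INR i - m) ^ j) 6))
    by (intros; unfold taylor_inv_rpow, c; cbn [sum_lt nth]; field; unfold m; nra).
  rewrite bin_mean_centered_poly; unfold c; cbn [sum_lt nth].
  autorewrite with cmoment.
  unfold bracket_r, taylor_mean_rem, m; field; split; lra.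
Qed.

Definition sixth_moment_rem (p y : R) : R :=
  (15 * p ^ 3 - 45 * p ^ 4 + 45 * p ^ 5 - 15 * p ^ 6
   + y * (25 * p ^ 2 - 180 * p ^ 3 + 415 * p ^ 4 - 390 * p ^ 5 + 130 * p ^ 6)
   + y ^ 2 * (p - 31 * p ^ 2 + 180 * p ^ 3 - 390 * p ^ 4 + 360 * p ^ 5 - 120 * p ^ 6)) / p ^ 6.

Lemma bin_mean_sixth_power (p : R) (n : nat) : 0 < p -> (1 <= n)%nat ->
  bin_mean p n (fun i => ((INR i - INR n * p) / (INR n * p)) ^ 6)
  = (/ INR n) ^ 3 * sixth_moment_rem p (/ INR n).
Proof.
  intros Hp Hn; pose proof (INR_ge1 n Hn).
  rewrite (bin_mean_ext p n _ (fun i => / (INR n * p) ^ 6 * (INR i - INR n * p) ^ 6))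
    by (intros; unfold Rdiv; rewrite Rpow_mult_distr, pow_inv; ring).
  rewrite bin_mean_scal; change (bin_mean p n _) with (cmoment p n 6); rewrite cmoment_6.
  unfold sixth_moment_rem; field; split; lra.
Qed.

Lemma Rpower_scale_le (p r : R) (m n : nat) : 0 < p < 1 -> 0 < r -> r <= INR m -> (1 <= n)%nat ->
  Rpower (INR n * p) r <= INR n ^ m.
Proof.
  intros Hp Hr Hrm Hn; pose proof (INR_ge1 n Hn).
  apply Rle_trans with (Rpower (INR n) r); [apply Rle_Rpower_l; nra|].
  rewrite <- Rpower_pow by lra; apply Rle_Rpower; lra.
Qed.

Lemma f_r_bigO (p r : R) : 0 < p < 1 -> 0 < r ->
  bigO_inv_pow (fun n => Rpower (INR n * p) r * f_r p r n - bracket_r r p n) 3.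
Proof.
  intros Hp Hr.
  destruct (taylor_inv_rpow_bound r Hr) as [C6 [HC6 Htaylor]].
  destruct (taylor_inv_rpow_bounded r p ltac:(lra)) as [MT [HMT HT]].
  destruct (nfloor_ex r ltac:(lra)) as [m Hm].
  assert (Hrm : r <= INR (S m)) by (rewrite S_INR; lra).
  set (u := fun n i => (INR i - INR n * p) / (INR n * p)).
  apply (bigO_inv_pow_ext _
    (fun n => (bin_mean p n (fun i => taylor_inv_rpow r (u n i)) - bracket_r r p n)
              + bin_mean p n (fun i => Rpower (INR n * p) r * inv_rpow r i
                                       - taylor_inv_rpow r (u n i)))).
  { intros n _; rewrite f_r_bin_mean, bin_mean_minus, bin_mean_scal; ring. }
  apply bigO_inv_pow_plus.
  { apply (bigO_inv_pow_of_derivable _ (taylor_mean_rem r p)).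
    - intros y _; unfold taylor_mean_rem.
      assert (0 < p ^ 3) by (apply pow_lt; lra); assert (0 < p ^ 5) by (apply pow_lt; lra).
      auto_derive; split; lra.
    - intros n Hn; apply bin_mean_taylor_inv_rpow; auto; lra. }
  apply (bigO_inv_pow_dominated _ (fun n => C6 * bin_mean p n (fun i => u n i ^ 6)
                                           + (Rpower (INR n * p) r + MT) * tail_rate p ^ n)).
  { intros n Hn; eapply Rle_trans; [apply bin_mean_abs; lra|]; eapply Rle_trans; [|apply Rle_abs].
    rewrite <- bin_mean_tail_weight, <- !bin_mean_scal, <- bin_mean_plus.
    apply bin_mean_le; [lra|]; intros i Hi.
    apply (inv_rpow_taylor_pointwise r p C6 MT n i); auto. }
  apply bigO_inv_pow_plus.
  { apply bigO_inv_pow_scal, (bigO_inv_pow_of_derivable _ (sixth_moment_rem p)).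
    - intros y _; unfold sixth_moment_rem; assert (0 < p ^ 6) by (apply pow_lt; lra).
      auto_derive; lra.
    - intros n Hn; apply bin_mean_sixth_power; auto; lra. }
  apply (bigO_inv_pow_mult _ _ (1 + MT) (S m)).
  - intros n Hn; pose proof (Rpower_scale_le p r (S m) n Hp Hr Hrm Hn).
    pose proof (INR_ge1 n Hn).
    assert (1 <= INR n ^ S m) by (rewrite <- (pow1 (S m)); apply pow_incr; lra).
    assert (0 < Rpower (INR n * p) r) by apply exp_pos.
    rewrite Rabs_right by lra.
    nra.
  - apply bigO_inv_pow_geom, tail_rate_lt_1; auto.
Qed.

Lemma expansion_of_bigO (s f T : nat -> R) (k : nat) :
  (forall n, (1 <= n)%nat -> s n <> 0) ->
  bigO_inv_pow (fun n => s n * f n - T n) k ->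
  exists E, bigO_inv_pow E k /\ forall n, (1 <= n)%nat -> f n = / s n * (T n + E n).
Proof.
  intros Hs HE; exists (fun n => s n * f n - T n); split; auto.
  intros n Hn; field; auto.
Qed.

Theorem corollary3 (p : R) (hp0 : 0 < p) (hp1 : p < 1) :
  let q := 1 - p in
  (forall r : R, 0 < r ->
     exists E : nat -> R, bigO_inv_pow E 3 /\
       forall n : nat, (1 <= n)%nat ->
         f_r p r n = / Rpower (INR n * p) r *
           (1 + r * (r + 1) * q / (2 * (INR n * p))
              + r * (r + 1) * (r + 2) * q * (4 + q + 3 * r * q)
                  / (24 * (INR n * p) ^ 2)
              + E n)) /\
  (exists E : nat -> R, bigO_inv_pow E 6 /\
     forall n : nat, (1 <= n)%nat ->
       f_r p 1 n = / (INR n * p) *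
         (1 + q / (INR n * p)
            + q * (1 + q) / (INR n * p) ^ 2
            + q * (1 + 4 * q + q ^ 2) / (INR n * p) ^ 3
            + q * (1 + q) * (1 + 10 * q + q ^ 2) / (INR n * p) ^ 4
            + q * (1 + 26 * q + 66 * q ^ 2 + 26 * q ^ 3 + q ^ 4) / (INR n * p) ^ 5
            + E n)) /\
  (exists E : nat -> R, bigO_inv_pow E 5 /\
     forall n : nat, (1 <= n)%nat ->
       f_r p 2 n = / (INR n * p) ^ 2 *
         (1 + 3 * q / (INR n * p)
            + q * (4 + 7 * q) / (INR n * p) ^ 2
            + 5 * q * (1 + 6 * q + 3 * q ^ 2) / (INR n * p) ^ 3
            + q * (6 + 91 * q + 146 * q ^ 2 + 31 * q ^ 3) / (INR n * p) ^ 4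
            + E n)) /\
  (exists E : nat -> R, bigO_inv_pow E 5 /\
     forall n : nat, (1 <= n)%nat ->
       f_r p 3 n = / (INR n * p) ^ 3 *
         (1 + 6 * q / (INR n * p)
            + 5 * q * (2 + 5 * q) / (INR n * p) ^ 2
            + 15 * q * (1 + 8 * q + 6 * q ^ 2) / (INR n * p) ^ 3
            + 7 * q * (3 + 58 * q + 128 * q ^ 2 + 43 * q ^ 3) / (INR n * p) ^ 4
            + E n)).
Proof.
  intros q; assert (Hp : 0 < p < 1) by lra.
  assert (Hnp : forall k n, (1 <= n)%nat -> (INR n * p) ^ k <> 0)
    by (intros k n Hn; pose proof (INR_ge1 n Hn); apply pow_nonzero; nra).
  split; [|split; [|split]].
  - intros r Hr; apply (expansion_of_bigO _ _ (bracket_r r p)); [|now apply f_r_bigO].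
    intros; apply Rgt_not_eq, exp_pos.
  - apply (expansion_of_bigO _ _ (bracket1 p)); [|now apply f_r_1_bigO].
    intros n Hn; rewrite <- (pow_1 (INR n * p)); auto.
  - apply (expansion_of_bigO _ _ (bracket2 p)); [auto | now apply f_r_2_bigO].
  - apply (expansion_of_bigO _ _ (bracket3 p)); [auto | now apply f_r_3_bigO].
Qed.
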